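(* Let $G$ be a profinite group. Then the following are equivalent: (i) every closed subgroup of $G$ has a closed permutable complement in $G$; (ii) every closed subgroup of $G$ has a permutable complement in $G$; (iii) every open subgroup of $G$ has a permutable complement in $G$; (iv) every open subgroup of $G$ has a closed permutable complement in $G$; (v) if $\mathcal{N}$ is a fundamental system of neighborhoods of the identity consisting of open normal subgroups of $G$, then $G/N$ is a $C$-group for every $N\in\mathcal{N}$; (vi) $G$ is an inverse limit of finite $C$-groups.
   Context: For a group $G$ and a subgroup $H\le G$, a permutable complement of $H$ in $G$ is a subgroup $K\le G$ with $G=HK$ and $H\cap K=1$. A group $G$ is a $C$-group if every subgroup of $G$ has a permutable complement in $G$. *)

From HB Require Import structures.
From mathcomp Require Import all_boot all_order all_fingroup.
From mathcomp Require Import classical_sets cardinality topology.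

Set Implicit Arguments.
Unset Strict Implicit.
Unset Printing Implicit Defensive.

Local Open Scope classical_set_scope.

#[short(type="topGroupType")]
HB.structure Definition TopGroup := {G of monoid.Group G & Topological G}.

Section TopGroupDefs.
Variable G : topGroupType.

Definition is_subgroup (H : set G) : Prop :=
  [/\ H 1%g,
      (forall x y, H x -> H y -> H (x * y)%g) &
      (forall x, H x -> H (x^-1)%g)].

Definition is_normal_subgroup (N : set G) : Prop :=
  is_subgroup N /\ (forall g x, N x -> N (g^-1 * x * g)%g).

Definition closed_subgroup (H : set G) := is_subgroup H /\ closed H.
Definition open_subgroup (H : set G) := is_subgroup H /\ open H.

Definition setmul (H K : set G) : set G := [set (x * y)%g | x in H & y in K].

Definition perm_complement (H K : set G) : Prop :=
  [/\ is_subgroup K, setmul H K = setT & H `&` K = [set 1%g]].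

Definition profinite : Prop :=
  [/\ continuous (fun p : G * G => (p.1 * p.2)%g),
      continuous (fun x : G => (x^-1)%g),
      compact [set: G],
      hausdorff_space G &
      totally_disconnected [set: G]].

Definition fundamental_system_open_normal (NN : set (set G)) : Prop :=
  (forall N, NN N -> open N /\ is_normal_subgroup N) /\
  (forall U, nbhs 1%g U -> exists2 N, NN N & N `<=` U).

(* f : G -> Q is (a realisation of) the quotient map G -> G/N, i.e. a
   surjective homomorphism with kernel N; then Q is (isomorphic to) G/N *)
Definition is_quotient_map (Q : finGroupType) (f : G -> Q) (N : set G) : Prop :=
  [/\ (forall x y, f (x * y)%g = (f x * f y)%g),
      (forall q, exists x, f x = q) &
      (forall x, f x = 1%g <-> N x)].
End TopGroupDefs.

Definition C_group (Q : finGroupType) : Prop :=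
  forall H : {group Q}, exists K : {group Q},
    (H * K)%g = [set: Q]%SET /\ (H :&: K)%g = 1%g.

Definition quotient_is_C_group (G : topGroupType) (N : set G) : Prop :=
  exists (Q : finGroupType) (f : G -> Q), is_quotient_map f N /\ C_group Q.

(* G is (topologically isomorphic to) the inverse limit of an inverse system
   (Q_i, phi_ij) of finite C-groups over a directed poset (I, le), with finite
   groups carrying the discrete topology. The data pi_i : G -> Q_i are the
   projections; the conditions say that g |-> (pi_i g)_i is a group isomorphism
   of G onto the group of compatible threads which is a homeomorphism onto it
   (subspace topology of the product of discrete spaces). *)
Definition inverse_limit_of_finite_C_groups (G : topGroupType) : Prop :=
  exists (I : Type) (le : I -> I -> Prop) (Q : I -> finGroupType)
         (phi : forall i j, Q i -> Q j) (pi : forall i, G -> Q i),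
  [/\
      [/\ inhabited I, (forall i, le i i),
          (forall i j k, le i j -> le j k -> le i k),
          (forall i j, le i j -> le j i -> i = j) &
          (forall i j, exists k, le i k /\ le j k)],
      (forall i, C_group (Q i)),
      [/\ (forall i j, le j i -> forall x y,
             phi i j (x * y)%g = (phi i j x * phi i j y)%g),
          (forall i x, phi i i x = x) &
          (forall i j k, le k j -> le j i -> forall x,
             phi i k x = phi j k (phi i j x))],
      [/\ (forall i x y, pi i (x * y)%g = (pi i x * pi i y)%g),
          (forall i q, open (pi i @^-1` [set q])) &
          (forall i j, le j i -> forall g, phi i j (pi i g) = pi j g)] &
      ((forall x : forall i, Q i,
          (forall i j, le j i -> phi i j (x i) = x j) ->
          exists! g, forall i, pi i g = x i) /\
      (* (topology of G = subspace topology of the product) *)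
      (forall U : set G, open U -> forall g, U g ->
          exists F : set I, finite_set F /\
            [set h | forall i, F i -> pi i h = pi i g] `<=` U))].

From HB Require Import structures.
From mathcomp Require Import all_boot all_order all_fingroup.
From mathcomp Require Import boolp classical_sets cardinality topology.

(* Everything rests on a separation property of a profinite group G: for every
   subgroup A and every x <> 1 in A there is a closed subgroup L with AL = G
   and x not in L.  Given it, a minimal closed supplement K of a closed
   subgroup H (Zorn's lemma; by compactness the intersection of a chain of
   closed supplements is one) is a complement: if 1 <> x in H cap K and L
   separates x from H cap K, then K cap L is a smaller closed supplement.
   The separation property follows from complements of open subgroups (for an
   open normal N avoiding x, complement AN by Y and take L = NY), and from a
   finite C-group quotient in which x survives (pull back a complement of the
   image of A).  Compact Hausdorff totally disconnected spaces have a basis of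
   clopen sets, so the open normal subgroups form a neighbourhood basis of 1;
   each G/N is finite, and by compactness G is the inverse limit of the G/N. *)

Set Implicit Arguments.
Unset Strict Implicit.
Unset Printing Implicit Defensive.

Local Open Scope classical_set_scope.

Section CompactSpace.
Variable T : topologicalType.
Hypothesis compactT : compact [set: T].

Lemma compact_directed_common_point (I : Type) (D : set I) (f : I -> set T) :
  D !=set0 -> (forall i, D i -> closed (f i)) -> (forall i, D i -> f i !=set0) ->
  (forall i j, D i -> D j -> exists2 k, D k & f k `<=` f i `&` f j) ->
  exists p, forall i, D i -> f i p.
Proof.
move=> [i0 Di0] clf nf0 dirf.
have FF : Filter (filter_from D f) by apply: filter_from_filter => //; exists i0.
have PF : ProperFilter (filter_from D f) by apply: filter_from_proper.
have [p [_ clp]] := compactT PF filterT.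
by exists p => i Di; apply: (clf i Di) => B /clp; apply; exists i.
Qed.

Lemma compact_separate_closed (A B : set T) : hausdorff_space T ->
  closed A -> closed B -> A `&` B = set0 ->
  exists U V, [/\ open U, open V, A `<=` U, B `<=` V & U `&` V = set0].
Proof.
move=> hT clA clB AB0.
have nbhsAB : set_nbhs A (~` B).
  apply/set_nbhsP; exists (~` B); split => //; first exact: closed_openC.
  by move=> a Aa Ba; have : (A `&` B) a by []; rewrite AB0.
have [W nbhsAW clWB] := compact_normal hT compactT clA nbhsAB.
have [U [oU AU UW]] := (set_nbhsP _ _).1 nbhsAW.
exists U, (~` closure W); split => //.
- exact/closed_openC/closed_closure.
- by move=> b Bb /clWB.
- by apply/seteqP; split => // u [/UW Wu]; apply; exact: subset_closure.
Qed.

Definition quasi_component (x : T) := \bigcap_(C in [set C | clopen C /\ C x]) C.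

Lemma quasi_component_refl x : quasi_component x x.
Proof. by move=> C []. Qed.

Lemma closed_quasi_component x : closed (quasi_component x).
Proof. by apply: closed_bigI => C [[]]. Qed.

Lemma quasi_component_open_sub x (W : set T) : open W ->
  quasi_component x `<=` W -> exists2 C, clopen C /\ C x & C `<=` W.
Proof.
move=> oW QW; apply: contrapT => noC.
have [||||p Cp] := @compact_directed_common_point _
  [set C | clopen C /\ C x] (fun C => C `&` ~` W).
- by exists [set: T]; split => //; exact: clopenT.
- by move=> C [[_ clC] _]; apply: closedI => //; exact: open_closedC.
- move=> C DC; apply: contrapT => /set0P/negP/negPn/eqP CW0.
  apply: noC; exists C => // z Cz; apply: contrapT => Wz.
  by have : (C `&` ~` W) z by []; rewrite CW0.
- move=> C1 C2 [cC1 C1x] [cC2 C2x]; exists (C1 `&` C2).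
    by split; [exact: clopenI |].
  by move=> z [[]].
have Qp : quasi_component x p by move=> C /Cp [].
by have [_] := Cp [set: T] (conj clopenT I); apply; exact: QW.
Qed.

Lemma quasi_component_disjoint_open_sub x (U V : set T) : open U -> open V ->
  U `&` V = set0 -> quasi_component x `<=` U `|` V -> U x ->
  quasi_component x `<=` U.
Proof.
move=> oU oV UV0 QUV Ux.
have [C [[oC clC] Cx] CUV] := quasi_component_open_sub (openU oU oV) QUV.
suff clopenCU : clopen (C `&` U) by move=> q /(_ _ (conj clopenCU (conj Cx Ux))) [].
split; first exact: openI.
suff -> : C `&` U = C `&` ~` V by apply: closedI => //; exact: open_closedC.
apply/seteqP; split => z [Cz Hz]; split => //.
  by move=> Vz; have : (U `&` V) z by []; rewrite UV0.
by case: (CUV z Cz).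
Qed.

(* Both halves of a separation of the quasi-component are closed, so they lie
   in disjoint open sets, and the quasi-component lies in the one containing x. *)
Lemma connected_quasi_component x : hausdorff_space T ->
  connected (quasi_component x).
Proof.
move=> hT; apply: contrapT => /connectedPn [E [E0 QE [clE0 clE1]]].
have clE b : closed (E b).
  move=> y clEy; have : quasi_component x y.
    apply: closed_quasi_component; apply: closureS clEy.
    by rewrite QE; case: b => ?; [right|left].
  rewrite QE; case: b clEy => clEy [] // Ey.
  + by have : (E false `&` closure (E true)) y by []; rewrite clE1.
  + by have : (closure (E false) `&` E true) y by []; rewrite clE0.
have [U0 [U1 [oU0 oU1 EU0 EU1 U01]]] :=
  compact_separate_closed hT (clE false) (clE true)
    (separated_disjoint (conj clE0 clE1)).
pose U b := if b then U1 else U0.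
have oU b : open (U b) by case: b.
have EU b : E b `<=` U b by case: b.
have UU0 b : U b `&` U (~~ b) = set0 by case: b; rewrite // setIC.
have QU01 : quasi_component x `<=` U false `|` U true.
  by rewrite QE => y [/EU0|/EU1]; [left|right].
have [b Exb] : exists b, E b x.
  by move: (@quasi_component_refl x); rewrite QE => -[]; [exists false|exists true].
have QU : quasi_component x `<=` U b.
  apply: (quasi_component_disjoint_open_sub (oU b) (oU (~~ b)) (UU0 b)); last exact: EU.
  by case: b {Exb}; rewrite // setUC.
have [y Ey] := E0 (~~ b).
have Qy : quasi_component x y by rewrite QE; case: b {Exb QU} Ey => ?; [left|right].
have : (U b `&` U (~~ b)) y by split; [exact: QU | exact: EU].
by rewrite UU0.
Qed.

Lemma totally_disconnected_quasi_component x : hausdorff_space T ->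
  totally_disconnected [set: T] -> quasi_component x = [set x].
Proof.
move=> hT tdT; apply/seteqP; split; last by move=> _ ->; exact: quasi_component_refl.
rewrite -(tdT x I); apply: connected_component_max => //.
  exact: quasi_component_refl.
exact: connected_quasi_component.
Qed.

Lemma totally_disconnected_clopen_nbhs x (U : set T) : hausdorff_space T ->
  totally_disconnected [set: T] -> nbhs x U -> exists2 C, clopen C /\ C x & C `<=` U.
Proof.
move=> hT tdT; rewrite nbhsE => -[V [oV Vx] VU].
have [|C Cx CV] := @quasi_component_open_sub x V oV.
  by rewrite totally_disconnected_quasi_component // => _ ->.
by exists C => //; exact: subset_trans VU.
Qed.
End CompactSpace.

Local Open Scope group_scope.

Section Subgroups.
Variable G : topGroupType.
Implicit Types A B N Y : set G.

Lemma setmulP A B z : setmul A B z <-> exists x y, [/\ A x, B y & z = x * y].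
Proof.
split; first by case=> x Ax [y By <-]; exists x, y.
by case=> x [y [Ax By ->]]; exists x => //; exists y.
Qed.

Lemma setmul_supl A B : B 1 -> A `<=` setmul A B.
Proof. by move=> B1 a Aa; apply/setmulP; exists a, 1; rewrite mulg1. Qed.

Lemma setmul_supr A B : A 1 -> B `<=` setmul A B.
Proof. by move=> A1 b Bb; apply/setmulP; exists 1, b; rewrite mul1g. Qed.

Lemma subgroupT : is_subgroup [set: G].
Proof. by []. Qed.

Lemma normal_subgroupT : is_normal_subgroup [set: G].
Proof. by []. Qed.

Lemma subgroupI A B : is_subgroup A -> is_subgroup B -> is_subgroup (A `&` B).
Proof.
case=> A1 AM AV [B1 BM BV]; split => //.
- by move=> x y [Ax Bx] [Ay By]; split; [exact: AM | exact: BM].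
- by move=> x [Ax Bx]; split; [exact: AV | exact: BV].
Qed.

Lemma subgroup_bigcap (I : Type) (D : set I) (K : I -> set G) :
  (forall i, D i -> is_subgroup (K i)) -> is_subgroup (\bigcap_(i in D) K i).
Proof.
move=> sgK; split; first by move=> i /sgK[].
  by move=> x y Kx Ky i Di; have [_ KM _] := sgK i Di; exact: KM (Kx i Di) (Ky i Di).
by move=> x Kx i Di; have [_ _ KV] := sgK i Di; exact: KV (Kx i Di).
Qed.

Lemma normal_subgroupI A B : is_normal_subgroup A -> is_normal_subgroup B ->
  is_normal_subgroup (A `&` B).
Proof.
move=> [sA nA] [sB nB]; split; first exact: subgroupI.
by move=> g x [Ax Bx]; split; [exact: nA | exact: nB].
Qed.

Lemma subgroup_mul_normal A N : is_subgroup A -> is_normal_subgroup N ->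
  is_subgroup (setmul A N).
Proof.
case=> A1 AM AV [[N1 NM NV] nN]; split.
- by apply/setmulP; exists 1, 1; rewrite mulg1.
- move=> _ _ /setmulP[a [n [Aa Nn ->]]] /setmulP[a' [n' [Aa' Nn' ->]]].
  apply/setmulP; exists (a * a'), (a'^-1 * n * a' * n'); split; [exact: AM| |].
    by apply: NM => //; exact: nN.
  by rewrite !mulgA mulgK.
- move=> _ /setmulP[a [n [Aa Nn ->]]].
  apply/setmulP; exists a^-1, (a * n^-1 * a^-1); split; [exact: AV| |].
    by have := nN a^-1 _ (NV _ Nn); rewrite invgK.
  by rewrite invgM !mulgA mulVg mul1g.
Qed.

Lemma normal_mul_subgroup N Y : is_normal_subgroup N -> is_subgroup Y ->
  is_subgroup (setmul N Y).
Proof.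
case=> [[N1 NM NV] nN] [Y1 YM YV]; split.
- by apply/setmulP; exists 1, 1; rewrite mulg1.
- move=> _ _ /setmulP[n [y [Nn Yy ->]]] /setmulP[n' [y' [Nn' Yy' ->]]].
  apply/setmulP; exists (n * (y * n' * y^-1)), (y * y'); split; [|exact: YM|].
    by apply: NM => //; have := nN y^-1 _ Nn'; rewrite invgK.
  by rewrite !mulgA mulgVK.
- move=> _ /setmulP[n [y [Nn Yy ->]]].
  apply/setmulP; exists (y^-1 * n^-1 * y), y^-1; split; [| exact: YV|].
    by apply: nN; exact: NV.
  by rewrite invgM mulgK.
Qed.

Section HomToFinGroup.
Variables (Q : finGroupType) (f : G -> Q).
Hypothesis fM : {morph f : x y / x * y}.

Lemma hom1 : f 1 = 1.
Proof. by apply: (mulgI (f 1)); rewrite -fM !mulg1. Qed.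

Lemma homV x : f x^-1 = (f x)^-1.
Proof. by apply: (mulgI (f x)); rewrite -fM !mulgV hom1. Qed.

Lemma preimage_subgroup (H : {group Q}) : is_subgroup [set x | f x \in H].
Proof.
split => /=; first by rewrite hom1 group1.
  by move=> x y; rewrite fM; exact: groupM.
by move=> x; rewrite homV; exact: groupVr.
Qed.

Definition image_set A : {set Q} := [set q | `[< (f @` A) q >]].

Lemma image_set_group A : is_subgroup A -> group_set (image_set A).
Proof.
move=> [A1 AM AV]; apply/group_setP; split.
  by rewrite inE; apply/asboolP; exists 1 => //; exact: hom1.
move=> u v; rewrite !inE => -[a Aa <-] [b Ab <-].
by exists (a * b); [exact: AM | rewrite fM].
Qed.

Definition image_group A (sA : is_subgroup A) : {group Q} := Group (image_set_group sA).

Lemma mem_image_set A a : A a -> f a \in image_set A.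
Proof. by move=> Aa; rewrite inE; apply/asboolP; exists a. Qed.
End HomToFinGroup.
End Subgroups.

Section CosetAction.
Variables (G : topGroupType) (N : set G) (n : nat) (r : 'I_n -> G).
Hypothesis nN : is_normal_subgroup N.
Hypothesis r_cover : forall y, exists i, N (y * (r i)^-1).
Hypothesis r_inj : forall i j, N (r i * (r j)^-1) -> i = j.

Definition coset_index (y : G) : 'I_n := sval (cid (r_cover y)).

Lemma coset_indexP y : N (y * (r (coset_index y))^-1).
Proof. exact: svalP (cid (r_cover y)). Qed.

Lemma coset_index_eq y i : N (y * (r i)^-1) -> coset_index y = i.
Proof.
have [[_ NM NV] _] := nN.
move=> Nyi; apply: r_inj.
have -> : r (coset_index y) * (r i)^-1 =
    (y * (r (coset_index y))^-1)^-1 * (y * (r i)^-1).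
  by rewrite invgM invgK !mulgA mulgVK.
by apply: NM => //; apply: NV; exact: coset_indexP.
Qed.

Lemma coset_index_mul_inj g : injective (fun i => coset_index (r i * g)).
Proof.
move=> i j /= Eij; apply: r_inj; have [[_ NM NV] _] := nN.
have Ni := coset_indexP (r i * g); rewrite Eij in Ni.
have -> : r i * (r j)^-1 = (r i * g * (r (coset_index (r j * g)))^-1) *
    (r j * g * (r (coset_index (r j * g)))^-1)^-1.
  by rewrite !invgM !invgK !mulgA mulgVK mulgK.
by apply: NM => //; apply: NV; exact: coset_indexP.
Qed.

(* [G] acts by right multiplication on the cosets [N r_i]; [G/N] is realised as
   the image of the induced permutation representation on their indices. *)
Definition coset_perm (g : G) : {perm 'I_n} := perm (@coset_index_mul_inj g).

Lemma coset_permM g h : coset_perm (g * h) = coset_perm g * coset_perm h.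
Proof.
have [[_ NM _] _] := nN.
apply/permP => i; rewrite permM !permE; apply: coset_index_eq.
have := NM _ _ (coset_indexP (r i * g)) (coset_indexP (r (coset_index (r i * g)) * h)).
by rewrite !mulgA mulgVK.
Qed.

Lemma coset_perm1P g : coset_perm g = 1 <-> N g.
Proof.
have [_ nNc] := nN.
split.
- have [i0 _] := r_cover 1.
  move=> /permP /(_ i0); rewrite permE perm1 => Ei0.
  have := nNc (r i0) _ (coset_indexP (r i0 * g)); rewrite Ei0.
  by rewrite !mulgA mulVg mul1g mulgVK.
- move=> Ng; apply/permP => i; rewrite permE perm1; apply: coset_index_eq.
  by have := nNc (r i)^-1 _ Ng; rewrite invgK.
Qed.

Lemma coset_quotient_map : exists (Q : finGroupType) (f : G -> Q), is_quotient_map f N.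
Proof.
pose P := image_group coset_permM (subgroupT G).
have PG g : coset_perm g \in P by exact: mem_image_set.
exists (subg_of P), (fun g => subg P (coset_perm g)); split.
- by move=> x y; rewrite coset_permM subgM.
- move=> q; have := subgP q; rewrite inE => /asboolP[g _ Eg].
  by exists g; rewrite Eg sgvalK.
- move=> x; rewrite -coset_perm1P; split => [Ex|Ex].
    by have := congr1 sgval Ex; rewrite subgK.
  by apply: val_inj; rewrite /= subgK // Ex.
Qed.
End CosetAction.

Section Supplements.
Variable G : topGroupType.
Implicit Types H K L : set G.

Definition closed_supplement H K := [/\ is_subgroup K, closed K & setmul H K = setT].

Definition closed_supplements_separate := forall (A : set G) x,
  is_subgroup A -> A x -> x <> 1 -> exists2 L, closed_supplement A L & ~ L x.

Lemma closed_supplementT H : is_subgroup H -> closed_supplement H [set: G].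
Proof.
case=> H1 _ _; split; [exact: subgroupT | exact: closedT |].
by apply/seteqP; split => // g _; exact: setmul_supr.
Qed.

Lemma closed_supplementI H K L : is_subgroup H -> closed_supplement H K ->
  closed_supplement (H `&` K) L -> closed_supplement H (K `&` L).
Proof.
move=> [_ HM _] [sgK clK HK] [sgL clL HKL].
split; [exact: subgroupI | exact: closedI |].
apply/seteqP; split => // g _.
have /setmulP[h [k [Hh Kk ->]]] : setmul H K g by rewrite HK.
have /setmulP[a [l [[Ha Ka] Ll Ekl]]] : setmul (H `&` K) L k by rewrite HKL.
apply/setmulP; exists (h * a), l; split; [exact: HM | | by rewrite Ekl mulgA].
have [_ KM KV] := sgK; split => //.
by rewrite -(mulKg a l) -Ekl; exact: KM (KV _ Ka) Kk.
Qed.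
End Supplements.

Section TopologicalGroup.
Variable G : topGroupType.
Hypothesis mul_cont : continuous (fun p : G * G => p.1 * p.2).
Hypothesis inv_cont : continuous (fun x : G => x^-1).

Lemma nbhs_mul (a b : G) (U : set G) : nbhs (a * b) U ->
  exists V W, [/\ nbhs a V, nbhs b W & forall x y, V x -> W y -> U (x * y)].
Proof.
move=> /(@mul_cont (a, b)) [[V W] [/= aV bW] VWU].
by exists V, W; split => // x y Vx Wy; exact: (VWU (x, y)).
Qed.

Lemma nbhs_lmul (g x : G) (U : set G) : nbhs (g * x) U ->
  nbhs x [set y | U (g * y)].
Proof.
case/nbhs_mul=> V [W [gV xW VWU]]; apply: filterS xW => y Wy.
exact: VWU (nbhs_singleton gV) Wy.
Qed.

Lemma nbhs_rmul (g x : G) (U : set G) : nbhs (x * g) U ->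
  nbhs x [set y | U (y * g)].
Proof.
case/nbhs_mul=> V [W [xV gW VWU]]; apply: filterS xV => y Vy.
exact: VWU Vy (nbhs_singleton gW).
Qed.

Lemma nbhs_inv (x : G) (U : set G) : nbhs x^-1 U -> nbhs x [set y | U y^-1].
Proof. exact: inv_cont. Qed.

Lemma open_lmul (g : G) (U : set G) : open U -> open [set y | U (g * y)].
Proof. by rewrite !openE => oU y /oU; exact: nbhs_lmul. Qed.

Lemma open_rmul (g : G) (U : set G) : open U -> open [set y | U (y * g)].
Proof. by rewrite !openE => oU y /oU; exact: nbhs_rmul. Qed.

Lemma closed_lmul (g : G) (U : set G) : closed U -> closed [set y | U (g * y)].
Proof. by rewrite -!openC => /(open_lmul g). Qed.

Lemma closed_rmul (g : G) (U : set G) : closed U -> closed [set y | U (y * g)].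
Proof. by rewrite -!openC => /(open_rmul g). Qed.

Lemma subgroup_nbhs1_open (H : set G) : is_subgroup H -> nbhs 1 H -> open H.
Proof.
case=> H1 HM HV H1nbhs; rewrite openE => h Hh.
have : nbhs (h^-1 * h) H by rewrite mulVg.
move/nbhs_lmul; apply: filterS => y /= Hhy.
by rewrite -(mulKVg h y); exact: HM.
Qed.

Lemma open_subgroup_closed (H : set G) : is_subgroup H -> open H -> closed H.
Proof.
case=> H1 HM HV oH; rewrite -openC openE => y nHy.
have : nbhs (y^-1 * y) H by rewrite mulVg; exact: open_nbhs_nbhs.
move/nbhs_lmul; apply: filterS => z /= Hyz Hz; apply: nHy.
have -> : y = z * (y^-1 * z)^-1 by rewrite invgM invgK mulKVg.
exact: HM Hz (HV _ Hyz).
Qed.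

Lemma C_group_quotient_separates (Q : finGroupType) (p : G -> Q) :
  C_group Q -> {morph p : x y / x * y} -> (forall q, open (p @^-1` [set q])) ->
  forall (A : set G) x, is_subgroup A -> A x -> p x <> 1 ->
  exists2 L, closed_supplement A L & ~ L x.
Proof.
move=> CQ pM p_open A x sgA Ax px1.
have [K [AK AK1]] := CQ (image_group pM sgA).
exists [set g | p g \in K]; first split.
- exact: preimage_subgroup.
- rewrite -openC openE => g nKg.
  suff : nbhs g (p @^-1` [set p g]) by apply: filterS => y /= ->.
  exact: open_nbhs_nbhs.
- apply/seteqP; split => // g _.
  have /mulsgP[b k Ab Kk pg] : p g \in (image_set p A * K)%g by rewrite AK inE.
  move: Ab; rewrite inE => /asboolP[a Aa pa].
  apply/setmulP; exists a, (a^-1 * g); split => //; last by rewrite mulKVg.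
  by rewrite /= pM homV // pa pg mulKg.
- move=> /= Kpx; have : p x \in (image_set p A :&: K)%g.
    by rewrite inE Kpx andbT mem_image_set.
  by rewrite AK1 inE => /eqP.
Qed.

Lemma inverse_limit_separates :
  inverse_limit_of_finite_C_groups G -> closed_supplements_separate G.
Proof.
case=> I [le [Q [phi [pi [_ CQ _ [piM pi_open pi_phi] [threads _]]]]]].
move=> A x sgA Ax x1.
suff [i pix1] : exists i, pi i x <> 1 by exact: C_group_quotient_separates pix1.
apply: contrapT => pix1; apply: x1.
have pi1 i : pi i 1 = 1 by exact: hom1.
have [g [_ g_uniq]] := threads (fun i => pi i 1) (fun i j ji => pi_phi i j ji 1).
rewrite -(g_uniq x) ?(g_uniq 1) // => i.
by rewrite pi1; apply: contrapT => pix; apply: pix1; exists i.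
Qed.

Section Compact.
Hypothesis compactG : compact [set: G].

(* [S] is the stabiliser of [C] under right translations; it is a
   neighbourhood of 1 by compactness of [C]. *)
Lemma clopen_open_subgroup (C : set G) : clopen C -> C 1 ->
  exists S, [/\ is_subgroup S, open S & S `<=` C].
Proof.
case=> oC clC C1.
pose S := [set g | forall c, C c -> C (c * g) /\ C (c * g^-1)].
have sgS : is_subgroup S.
  split.
  - by move=> c Cc; rewrite invg1 mulg1.
  - move=> g h Sg Sh c Cc; split.
      by rewrite mulgA; apply: (Sh _ (Sg _ Cc).1).1.
    by rewrite invgM mulgA; apply: (Sg _ (Sh _ Cc).2).2.
  - by move=> g Sg c /Sg[]; rewrite invgK.
exists S; split => //; last by move=> g /(_ 1 C1) []; rewrite mul1g.
apply: subgroup_nbhs1_open => //.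
have cC : compact C := subclosed_compact clC compactG (@subsetT _ C).
apply: ((compact_near_coveringP C).1 cC G (nbhs (1:G))
   (fun g c => C (c * g) /\ C (c * g^-1))) => c Cc.
have : nbhs (c * 1) C by rewrite mulg1; move: oC; rewrite openE; exact.
case/nbhs_mul => V [W [cV W1 VWC]].
have : nbhs (c * 1^-1) C by rewrite invg1 mulg1; move: oC; rewrite openE; exact.
case/nbhs_mul => V' [W' [cV' W'1 VW'C]].
exists (V `&` V', W `&` [set y | W' y^-1]).
  split; first exact: filterI.
  by apply: filterI => //; exact: nbhs_inv.
by case=> a b [[Va V'a] [Wb W'b]] /=; split; [exact: VWC | exact: VW'C].
Qed.

(* The normal core of [S]: a neighbourhood of 1 by compactness of [G]. *)
Lemma open_subgroup_normal_core (S : set G) : is_subgroup S -> open S ->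
  exists N, [/\ open N, is_normal_subgroup N & N `<=` S].
Proof.
case=> S1 SM SV oS.
pose N := [set g | forall x, S (x^-1 * g * x)].
have sgN : is_subgroup N.
  split.
  - by move=> x; rewrite mulg1 mulVg.
  - move=> g h Ng Nh x.
    have -> : x^-1 * (g * h) * x = (x^-1 * g * x) * (x^-1 * h * x).
      by rewrite !mulgA mulgK.
    exact: SM.
  - move=> g Ng x.
    have -> : x^-1 * g^-1 * x = (x^-1 * g * x)^-1 by rewrite !invgM invgK !mulgA.
    exact: SV.
exists N; split => //.
- apply: subgroup_nbhs1_open => //.
  suff : \forall g \near (nbhs (1:G)), [set: G] `<=` (fun x => S (x^-1 * g * x)).
    by apply: filterS => g Hg x; exact: Hg.
  apply: ((compact_near_coveringP setT).1 compactG G (nbhs (1:G))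
    (fun g x => S (x^-1 * g * x))) => x0 _.
  have : nbhs ((x0^-1 * 1) * x0) S.
    by rewrite mulg1 mulVg; apply: open_nbhs_nbhs.
  case/nbhs_mul => V1 [W1 [nV1 nW1 VW1]].
  case/nbhs_mul: nV1 => V2 [W2 [nV2 nW2 VW2]].
  exists (W1 `&` [set x | V2 x^-1], W2).
    by split => //; apply: filterI => //; exact: nbhs_inv.
  by case=> a b [[W1a V2a] W2b] /=; apply: VW1 => //; exact: VW2.
- split => // g x Nx y.
  have -> : y^-1 * (g^-1 * x * g) * y = (g * y)^-1 * x * (g * y).
    by rewrite invgM !mulgA.
  exact: Nx.
- by move=> g /(_ 1); rewrite invg1 mul1g mulg1.
Qed.

Section OpenNormalQuotient.
Variable N : set G.
Hypothesis oN : open N.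
Hypothesis nN : is_normal_subgroup N.

Lemma open_normal_coset_cover :
  exists s : seq G, forall y, exists2 r, r \in s & N (y * r^-1).
Proof.
have [N1 _ _] := nN.1.
apply: contrapT => no_cover.
have [||||p sp] := @compact_directed_common_point G compactG (seq G) setT
  (fun s => \bigcap_(r in [set r | r \in s]) ~` [set y | N (y * r^-1)]).
- by exists [::].
- by move=> s _; apply: closed_bigI => r _; apply: open_closedC; exact: open_rmul.
- move=> s _; apply: contrapT => /set0P/negP/negPn/eqP s0; apply: no_cover.
  exists s => y; apply: contrapT => ny.
  suff : (\bigcap_(r in [set r | r \in s]) ~` [set y | N (y * r^-1)]) y by rewrite s0.
  by move=> r sr Nr; apply: ny; exists r.
- move=> s t _ _; exists (s ++ t) => // y Hy.
  by split => r rs; apply: Hy; rewrite /= mem_cat rs ?orbT.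
by apply: (sp [:: p] I p (mem_head _ _)); rewrite /= mulgV.
Qed.

(* A covering family of coset representatives of minimal size is injective. *)
Lemma open_normal_transversal : exists n (r : 'I_n -> G),
  (forall y, exists i, N (y * (r i)^-1)) /\
  (forall i j, N (r i * (r j)^-1) -> i = j).
Proof.
have [[_ NM NV] _] := nN.
pose P n := `[< exists r : 'I_n -> G, forall y, exists i, N (y * (r i)^-1) >].
have P_size : exists n, P n.
  have [s s_cover] := open_normal_coset_cover.
  exists (size s); apply/asboolP; exists (fun i => nth 1 s i) => y.
  have [r sr Nyr] := s_cover y.
  by exists (Ordinal (etrans (index_mem r s) sr)); rewrite /= nth_index.
case: (ex_minnP P_size) => n /asboolP[r r_cover] n_min.
exists n, r; split => // i j Nij; case: (eqVneq i j) => // neq_ij.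
have n_gt0 : 0 < n := leq_ltn_trans (leq0n i) (ltn_ord i).
suff /n_min : P n.-1 by rewrite leqNgt ltn_predL n_gt0.
apply/asboolP; exists (fun k => r (lift j k)) => y.
have [i0 Nyi0] := r_cover y.
case: (unliftP j i0) => [k Ei0|Ei0]; first by exists k; rewrite -Ei0.
case: (unliftP j i) => [k Ei|Eij]; last by rewrite Eij eqxx in neq_ij.
exists k; rewrite -Ei; rewrite Ei0 in Nyi0.
have -> : y * (r i)^-1 = (y * (r j)^-1) * (r i * (r j)^-1)^-1.
  by rewrite invgM invgK !mulgA mulgVK.
exact: NM Nyi0 (NV _ Nij).
Qed.

Lemma open_normal_quotient_map : exists (Q : finGroupType) (f : G -> Q),
  is_quotient_map f N.
Proof.
have [n [r [r_cover r_inj]]] := open_normal_transversal.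
exact: coset_quotient_map nN r_cover r_inj.
Qed.

End OpenNormalQuotient.

Lemma closed_supplement_bigcap (H : set G) (I : Type) (D : set I) (K : I -> set G) :
  is_subgroup H -> closed H -> (forall i, D i -> closed_supplement H (K i)) ->
  (forall i j, D i -> D j -> K i `<=` K j \/ K j `<=` K i) ->
  closed_supplement H (\bigcap_(i in D) K i).
Proof.
move=> sgH clH suppK totK.
have [[i0 Di0]|D0] := pselect (exists i, D i); last first.
  rewrite (_ : \bigcap_(i in D) K i = setT); first exact: closed_supplementT.
  by apply/seteqP; split => // x _ i Di; case: D0; exists i.
split.
- by apply: subgroup_bigcap => i /suppK[].
- by apply: closed_bigI => i /suppK[].
apply/seteqP; split => // g _; have [_ _ HV] := sgH.
have [||||p Kp] := @compact_directed_common_point G compactG I D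
  (fun i => K i `&` [set k | H (k * g^-1)]).
- by exists i0.
- move=> i /suppK[_ clK _]; apply: closedI => //; exact: closed_rmul.
- move=> i /suppK[_ _ HK].
  have /setmulP[h [k [Hh Kk ->]]] : setmul H (K i) g by rewrite HK.
  by exists k; split => //=; rewrite invgM mulgA mulgV mul1g; exact: HV.
- move=> i j Di Dj; case: (totK i j Di Dj) => KK.
    by exists i => // z [Kz Hz]; split => //; split => //; exact: KK.
  by exists j => // z [Kz Hz]; split => //; split => //; exact: KK.
apply/setmulP; exists (g * p^-1), p; split; last by rewrite mulgVK.
- by have [_ /HV] := Kp i0 Di0; rewrite invgM invgK.
- by move=> i /Kp[].
Qed.

(* Zorn's lemma is applied to the complements of closed supplements, so that
   a maximal complement is a minimal closed supplement. *)
Lemma closed_supplements_separate_complement : closed_supplements_separate G ->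
  forall H : set G, closed_subgroup H -> exists K, closed K /\ perm_complement H K.
Proof.
move=> sep H [sgH clH].
pose P := [set A | closed_supplement H (~` A)].
have P_chain F : F `<=` P -> total_on F subset -> P (\bigcup_(X in F) X).
  move=> FP totF; rewrite /P /= setC_bigcup.
  apply: closed_supplement_bigcap => // X Y FX FY.
  by case: (totF X Y FX FY) => /subsetC; [right|left].
have [A [suppA maxA]] := Zorn_bigcup P_chain.
have [sgK clK HK] := suppA.
exists (~` A); split => //; split => //.
apply/seteqP; split; last by move=> _ ->; split; [case: sgH | case: sgK].
move=> x [Hx Kx]; apply: contrapT => x1.
have [L suppL nLx] := sep _ _ (subgroupI sgH sgK) (conj Hx Kx) x1.
have [KLA|nKLA] := pselect (~` (~` A `&` L) `<=` A).
  by apply: nLx; apply: contrapT => nLx'; apply: Kx; apply: KLA => -[_ /nLx'].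
apply: (maxA (~` (~` A `&` L))); first by split => // a Aa [].
by rewrite /P /= setCK; exact: closed_supplementI.
Qed.

Section Profinite.
Hypothesis hausdorffG : hausdorff_space G.
Hypothesis tdG : totally_disconnected [set: G].

Lemma open_normal_subgroup_nbhs1 (U : set G) : nbhs 1 U ->
  exists N, [/\ open N, is_normal_subgroup N & N `<=` U].
Proof.
move=> /(totally_disconnected_clopen_nbhs compactG hausdorffG tdG) [C [cC C1] CU].
have [S [sgS oS SC]] := clopen_open_subgroup cC C1.
have [N [oN nN NS]] := open_subgroup_normal_core sgS oS.
by exists N; split => // x /NS /SC /CU.
Qed.

Lemma open_normal_subgroup_avoiding (x : G) : x <> 1 ->
  exists N, [/\ open N, is_normal_subgroup N & ~ N x].
Proof.
move=> x1; have clx : closed [set x].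
  by apply: accessible_closed_set1; exact: hausdorff_accessible.
have : nbhs 1 (~` [set x]).
  by apply: open_nbhs_nbhs; split; [exact: closed_openC | move=> /esym].
by case/open_normal_subgroup_nbhs1 => N [oN nN NU]; exists N; split => // /NU; exact.
Qed.

Lemma open_complements_separate :
  (forall H : set G, open_subgroup H -> exists K, perm_complement H K) ->
  closed_supplements_separate G.
Proof.
move=> open_compl A x sgA Ax x1.
have [N [oN nN nNx]] := open_normal_subgroup_avoiding x1.
have [[N1 _ _] _] := nN; have [A1 _ _] := sgA.
have N_nbhs1 : nbhs 1 N by exact: open_nbhs_nbhs.
have sgAN := subgroup_mul_normal sgA nN.
have oAN : open (setmul A N).
  by apply: subgroup_nbhs1_open => //; apply: filterS N_nbhs1; exact: setmul_supr.
have [Y [sgY ANY ANY1]] := open_compl _ (conj sgAN oAN).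
have sgNY := normal_mul_subgroup nN sgY.
exists (setmul N Y); first split => //.
- apply: open_subgroup_closed => //; apply: subgroup_nbhs1_open => //.
  by apply: filterS N_nbhs1; apply: setmul_supl; case: sgY.
- apply/seteqP; split => // g _.
  have /setmulP[_ [y [/setmulP[a [n [Aa Nn ->]]] Yy ->]]] : setmul (setmul A N) Y g.
    by rewrite ANY.
  apply/setmulP; exists a, (n * y); split => //; last by rewrite mulgA.
  by apply/setmulP; exists n, y.
- case/setmulP => n [y [Nn Yy Exny]].
  have ANy : setmul A N y.
    have [_ ANM ANV] := sgAN; rewrite -(mulKg n y) -Exny.
    by apply: ANM; [apply: ANV; exact: setmul_supr | exact: setmul_supl].
  have : (setmul A N `&` Y) y by [].
  by rewrite ANY1 => y1; apply: nNx; rewrite Exny y1 mulg1.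
Qed.

Lemma open_complements_quotients_C_group :
  (forall H : set G, open_subgroup H -> exists K, perm_complement H K) ->
  forall NN : set (set G), fundamental_system_open_normal NN ->
  forall N, NN N -> quotient_is_C_group N.
Proof.
move=> open_compl NN [NN_open _] N /NN_open [oN nN]; have [[N1 _ _] _] := nN.
have [Q [f fquot]] := open_normal_quotient_map oN nN.
exists Q, f; split => //; have [fM f_onto f_ker] := fquot.
move=> H; have sgHf := preimage_subgroup fM H.
have oHf : open [set g | f g \in H].
  apply: subgroup_nbhs1_open => //; apply: filterS (open_nbhs_nbhs (conj oN N1)).
  by move=> g /f_ker /= ->; rewrite group1.
have [K [sgK HfK HfK1]] := open_compl _ (conj sgHf oHf).
exists (image_group fM sgK); split.
- apply/setP => q; rewrite [in RHS]inE; have [g <-] := f_onto q.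
  have /setmulP[h [k [Hh Kk ->]]] : setmul [set g | f g \in H] K g by rewrite HfK.
  by rewrite fM mem_mulg // mem_image_set.
- apply/trivgP/fintype.subsetP => q /setIP[Hq]; rewrite inE => /asboolP[k Kk Ek].
  have : ([set g | f g \in H] `&` K) k by split => //; rewrite /= Ek.
  by rewrite HfK1 => k1; rewrite -Ek k1 hom1 // inE.
Qed.

Definition open_normal_subgroups := {N : set G | open N /\ is_normal_subgroup N}.
Implicit Types i j k : open_normal_subgroups.

Definition open_normal_meet i j : open_normal_subgroups :=
  exist _ (sval i `&` sval j)
    (conj (openI (svalP i).1 (svalP j).1) (normal_subgroupI (svalP i).2 (svalP j).2)).

Definition open_normal_top : open_normal_subgroups :=
  exist _ [set: G] (conj openT (normal_subgroupT G)).

Section Quotients.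
Variables (Q : open_normal_subgroups -> finGroupType) (pi : forall i, G -> Q i).
Hypothesis pi_quot : forall i, is_quotient_map (pi i) (sval i).

Lemma pi_eqP i x y : pi i x = pi i y <-> sval i (x^-1 * y).
Proof.
have [piM _ pi_ker] := pi_quot i; rewrite -pi_ker piM homV //.
by split => [->|/eqP]; [exact: mulVg | rewrite -eq_mulVg1 => /eqP].
Qed.

Lemma pi_eq_sub i j x y : sval i `<=` sval j -> pi i x = pi i y -> pi j x = pi j y.
Proof. by move=> ij /pi_eqP /ij /pi_eqP. Qed.

Lemma pi_surj i q : exists g, pi i g = q.
Proof. by case: (pi_quot i) => _ + _; apply. Qed.

Definition pi_sec i (q : Q i) : G := sval (cid (pi_surj q)).

Lemma pi_secK i q : pi i (pi_sec q) = q.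
Proof. exact: svalP (cid (pi_surj q)). Qed.

Definition transition i j (q : Q i) : Q j := pi j (pi_sec q).

Lemma transition_pi i j g : sval i `<=` sval j -> transition j (pi i g) = pi j g.
Proof. by move=> ij; apply: pi_eq_sub ij _; rewrite pi_secK. Qed.

Lemma pi_fibreE i q : pi i @^-1` [set q] = [set y | sval i ((pi_sec q)^-1 * y)].
Proof. by apply/seteqP; split => y /=; rewrite -pi_eqP pi_secK => ->. Qed.

Lemma open_pi_fibre i q : open (pi i @^-1` [set q]).
Proof. by rewrite pi_fibreE; apply: open_lmul => //; exact: (svalP i).1. Qed.

Lemma closed_pi_fibre i q : closed (pi i @^-1` [set q]).
Proof.
rewrite pi_fibreE; apply: closed_lmul => //; have [oN [sgN _]] := svalP i.
exact: open_subgroup_closed.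
Qed.

Lemma transitionM i j x y : sval i `<=` sval j ->
  transition j (x * y : Q i) = transition j x * transition j y.
Proof.
have [piMi _ _] := pi_quot i; have [piMj _ _] := pi_quot j.
by move=> ij; rewrite -(pi_secK x) -(pi_secK y) -piMi !transition_pi // piMj.
Qed.

Lemma transition_id i (x : Q i) : transition i x = x.
Proof. by rewrite -{1}(pi_secK x) transition_pi // pi_secK. Qed.

Lemma transition_comp i j k (x : Q i) : sval i `<=` sval j -> sval j `<=` sval k ->
  transition k x = transition k (transition j x).
Proof.
move=> ij jk; rewrite -(pi_secK x) !transition_pi //; exact: subset_trans jk.
Qed.

Lemma pi_thread (x : forall i, Q i) :
  (forall i j, sval i `<=` sval j -> transition j (x i) = x j) ->
  exists g, forall i, pi i g = x i.
Proof.
move=> x_compat.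
have [||||g xg] := @compact_directed_common_point G compactG _ setT
  (fun i => pi i @^-1` [set x i]).
- by exists open_normal_top.
- by move=> i _; exact: closed_pi_fibre.
- by move=> i _; exists (pi_sec (x i)); exact: pi_secK.
- move=> i j _ _; pose k := open_normal_meet i j.
  have ki : sval k `<=` sval i by exact: subIsetl.
  have kj : sval k `<=` sval j by exact: subIsetr.
  exists k => // y /= xy.
  by split; [rewrite -(x_compat k i ki) | rewrite -(x_compat k j kj)];
    rewrite -xy transition_pi.
by exists g => i; exact: xg.
Qed.

Lemma pi_inj g h : (forall i, pi i g = pi i h) -> g = h.
Proof.
move=> pigh; apply: contrapT => neq_gh.
have gh1 : g^-1 * h <> 1 by move=> gh1; apply: neq_gh; rewrite -(mulKVg g h) gh1 mulg1.
have [N [oN nN nNgh]] := open_normal_subgroup_avoiding gh1.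
by apply: nNgh; exact: (pi_eqP (exist _ N (conj oN nN)) g h).1 (pigh _).
Qed.

Lemma pi_nbhs (U : set G) g : open U -> U g ->
  exists i, [set h | pi i h = pi i g] `<=` U.
Proof.
move=> oU Ug; have : nbhs (g * 1) U by rewrite mulg1; exact: open_nbhs_nbhs.
case/nbhs_lmul/open_normal_subgroup_nbhs1 => N [oN nN NU].
exists (exist _ N (conj oN nN)) => h /esym /pi_eqP /NU /=.
by rewrite mulKVg.
Qed.

Lemma quotient_system_inverse_limit : (forall i, C_group (Q i)) ->
  inverse_limit_of_finite_C_groups G.
Proof.
move=> QC; exists open_normal_subgroups, (fun i j => sval j `<=` sval i), Q,
  (fun i j => @transition i j), pi; split => //.
- split.
  + exact: inhabits open_normal_top.
  + by move=> i.
  + by move=> i j k ji kj; exact: subset_trans kj ji.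
  + by move=> [N oN] [M oM] /= MN NM; apply: eq_exist; exact/seteqP.
  + move=> i j; exists (open_normal_meet i j).
    by split; [exact: subIsetl | exact: subIsetr].
- split; [by move=> i j ij x y; exact: transitionM | exact: transition_id | ].
  by move=> i j k kj ji x; exact: transition_comp.
- split; [by move=> i; case: (pi_quot i) | exact: open_pi_fibre | ].
  by move=> i j ji g; exact: transition_pi.
split.
- move=> x x_compat; have [g xg] := pi_thread x_compat.
  by exists g; split => // h xh; apply: pi_inj => i; rewrite xg xh.
- move=> U oU g Ug; have [i iU] := pi_nbhs oU Ug.
  by exists [set i]; split; [exact: finite_set1 | move=> h /(_ i erefl); exact: iU].
Qed.
End Quotients.

Lemma quotients_C_group_inverse_limit :
  (forall NN : set (set G), fundamental_system_open_normal NN ->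
     forall N, NN N -> quotient_is_C_group N) ->
  inverse_limit_of_finite_C_groups G.
Proof.
move=> quotC.
have all_fund :
    fundamental_system_open_normal [set N : set G | open N /\ is_normal_subgroup N].
  split => // U /open_normal_subgroup_nbhs1.
  by case=> N [oN nN NU]; exists N.
have QC (i : open_normal_subgroups) : {Q : finGroupType &
    {f : G -> Q | is_quotient_map f (sval i) /\ C_group Q}}.
  have /cid [Q /cid [f fQ]] := quotC _ all_fund _ (svalP i).
  exact: existT _ Q (exist _ f fQ).
apply: (@quotient_system_inverse_limit (fun i => projT1 (QC i))
  (fun i => sval (projT2 (QC i)))).
- by move=> i; exact: (svalP (projT2 (QC i))).1.
- by move=> i; exact: (svalP (projT2 (QC i))).2.
Qed.

End Profinite.
End Compact.
End TopologicalGroup.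

Theorem theoremA (G : topGroupType) (hG : profinite G) :
  [<-> (forall H : set G, closed_subgroup H ->
          exists K : set G, closed K /\ perm_complement H K);
       (forall H : set G, closed_subgroup H ->
          exists K : set G, perm_complement H K);
       (forall H : set G, open_subgroup H ->
          exists K : set G, perm_complement H K);
       (forall H : set G, open_subgroup H ->
          exists K : set G, closed K /\ perm_complement H K);
       (forall NN : set (set G), fundamental_system_open_normal NN ->
          forall N, NN N -> quotient_is_C_group N);
       inverse_limit_of_finite_C_groups G].
Proof.
have [mul_cont inv_cont compactG hausdorffG tdG] := hG.
have closed_compl := closed_supplements_separate_complement mul_cont compactG.
tfae.
- by move=> closed_closed_compl H /closed_closed_compl [K [_ HK]]; exists K.
- move=> closed_compl' H [sgH oH]; apply: closed_compl'.
  by split=> //; exact: open_subgroup_closed.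
- move=> open_compl H [sgH oH]; apply: closed_compl.
    exact: open_complements_separate.
  by split=> //; exact: open_subgroup_closed.
- move=> open_closed_compl; apply: open_complements_quotients_C_group => //.
  by move=> H /open_closed_compl [K [_ HK]]; exists K.
- exact: quotients_C_group_inverse_limit.
- by move=> /inverse_limit_separates; exact: closed_compl.
Qed.
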